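(* Fix $\alpha\in(0,1)$. For every $\rho\in[0,\infty)^{\mathcal E}$ with $f=\mu(\rho)\in\mathcal F$, and every $\pi\in\Pi$, $$\nabla_\rho W(\rho,\pi)'H(f,\pi)=\sum_{v=0}^{n-1}\alpha^v\sum_{e\in\mathcal E_v^+}\sigma_e H_e(f,\pi)\le-(1-\alpha)V(f,\pi),$$ where the gradient is computed with the convention $\frac{d}{dx}|x|=\mathrm{sgn}(x)$ for all $x$ (including $x=0$).
   Context: $\mathcal G=(\mathcal V,\mathcal E)$ is a finite directed graph with $\mathcal V=\{0,1,\dots,n\}$, containing no directed cycle, in which node $0$ is the unique node with no incoming link, node $n$ is the unique node with no outgoing link, there is a directed path from every node to $n$, and every link $(u,v)\in\mathcal E$ satisfies $u<v$. For $v\in\mathcal V$, $\mathcal E_v^-$ and $\mathcal E_v^+$ are the sets of links entering and leaving $v$. Each link $e$ has a flow-density function $\mu_e:[0,\infty)\to[0,\infty)$ that is continuously differentiable, strictly increasing, strictly concave, with $\mu_e(0)=0$ and $\mu_e'(0)<\infty$; $C_e:=\lim_{\rho\to\infty}\mu_e(\rho)\in(0,+\infty]$; $\mathcal F_v:=\prod_{e\in\mathcal E_v^+}[0,C_e)$, $\mathcal F:=\prod_{e\in\mathcal E}[0,C_e)$, $\mu(\rho):=(\mu_e(\rho_e))_e$. $\mathcal P$ is the set of directed paths from $0$ to $n$, $A$ the link-path incidence matrix ($A_{ep}=1$ iff $e\in p$), $\mathcal S(\cdot)$ denotes a probability simplex, $\Pi:=\{\pi\in\mathcal S(\mathcal P):(A\pi)_e<C_e\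 \forall e\}$, $f^\pi:=A\pi$, $\rho^\pi_e:=\mu_e^{-1}(f^\pi_e)$. For each $v\in\{0,\dots,n-1\}$ a continuously differentiable $G^v:\mathcal F_v\times\Pi\to\mathcal S(\mathcal E_v^+)$ is given such that (consistency) $(\sum_{j\in\mathcal E_v^+}f^\pi_j)\,G^v_e(f^\pi_{\mathcal E_v^+},\pi)=f^\pi_e$ for all $\pi\in\Pi$, $e\in\mathcal E_v^+$; and (cooperativity) $\partial G^v_j(f_{\mathcal E_v^+},\pi)/\partial f_e\ge0$ for all $\pi\in\Pi$, $f_{\mathcal E_v^+}\in\mathcal F_v$, $j\neq e\in\mathcal E_v^+$. For $f\in\mathcal F$, $\pi\in\Pi$, $e\in\mathcal E_v^+$: $H_e(f,\pi):=G^v_e(f_{\mathcal E_v^+},\pi)-f_e$ if $v=0$, and $H_e(f,\pi):=(\sum_{j\in\mathcal E_v^-}f_j)G^v_e(f_{\mathcal E_v^+},\pi)-f_e$ if $1\le v<n$. Notation: $\sigma_e:=\mathrm{sgn}(f_e-f^\pi_e)=\mathrm{sgn}(\rho_e-\rho^\pi_e)$ ($\mathrm{sgn}(0)=0$); $V(f,\pi):=\sum_{v=0}^{n-1}\alpha^v\sum_{e\in\mathcal E_v^+}|f_e-f^\pi_e|$; $W(\rho,\pi):=\sum_{v=0}^{n-1}\alpha^v\sum_{e\in\mathcal E_v^+}|\rho_e-\rho^\pi_e|$. *)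

From Stdlib Require Import Reals Lra Lia List Arith.
Import ListNotations.
Open Scope R_scope.

Definition sumL {A : Type} (l : list A) (F : A -> R) : R :=
  fold_right (fun x acc => F x + acc) 0 l.

Definition sumN (N : nat) (F : nat -> R) : R := sumL (seq 0 N) F.

Definition sgn (x : R) : R :=
  if Rlt_dec 0 x then 1 else if Rlt_dec x 0 then -1 else 0.

(* The graph.  Nodes are 0..n; links are indexed by 0..m-1; link e goes
   from node (tl e) to node (hd e).                                    *)

Fixpoint path_from (n m : nat) (tl hd : nat -> nat) (u : nat) (p : list nat)
  : Prop :=
  match p with
  | [] => u = n
  | e :: p' => (e < m)%nat /\ tl e = u /\ path_from n m tl hd (hd e) p'
  end.

Definition is_path n m tl hd (p : list nat) : Prop := path_from n m tl hd 0 p.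

Definition network (n m : nat) (tl hd : nat -> nat) : Prop :=
  (* links are pairs (u,v) with u < v (no multi-links; acyclic) *)
  (forall e, (e < m)%nat -> (tl e < hd e)%nat /\ (hd e <= n)%nat) /\
  (forall e e', (e < m)%nat -> (e' < m)%nat ->
      tl e = tl e' -> hd e = hd e' -> e = e') /\
  (* 0 is the unique node with no incoming link *)
  (forall v, (1 <= v <= n)%nat -> exists e, (e < m)%nat /\ hd e = v) /\
  (* n is the unique node with no outgoing link *)
  (forall v, (v < n)%nat -> exists e, (e < m)%nat /\ tl e = v) /\
  (forall v, (v <= n)%nat -> exists p, path_from n m tl hd v p).

Fixpoint lists_len (k m : nat) : list (list nat) :=
  match k with
  | O => [[]]
  | S k' => flat_map (fun e => map (cons e) (lists_len k' m)) (seq 0 m)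
  end.

(* A finite list of candidate paths (lists of length <= n over links);
   it contains every path from 0 to n, since each link strictly increases
   the node index.  Used only to express finite sums over P.           *)
Definition cand_paths (n m : nat) : list (list nat) :=
  flat_map (fun k => lists_len k m) (seq 0 (S n)).

Definition memb (e : nat) (p : list nat) : bool := existsb (Nat.eqb e) p.

Definition fpi (n m : nat) (pi : list nat -> R) (e : nat) : R :=
  sumL (cand_paths n m) (fun p => if memb e p then pi p else 0).

(* derivative of h at x within the set D (one-sided at boundary points) *)
Definition deriv_within (h : R -> R) (D : R -> Prop) (x l : R) : Prop :=
  limit1_in (fun y => (h y - h x) / (y - x)) (fun y => D y /\ y <> x) l x.

Definition nonneg (x : R) : Prop := 0 <= x.

Definition flow_density (mu : R -> R) : Prop :=
  (exists dmu : R -> R,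
      (forall x, 0 <= x -> deriv_within mu nonneg x (dmu x)) /\
      (forall x, 0 <= x -> limit1_in dmu nonneg (dmu x) x)) /\
  (forall x y, 0 <= x -> x < y -> mu x < mu y) /\
  (forall x y t, 0 <= x -> 0 <= y -> x <> y -> 0 < t < 1 ->
      t * mu x + (1 - t) * mu y < mu (t * x + (1 - t) * y)) /\
  mu 0 = 0.

(* x < C_e where C_e = lim_{rho -> infty} mu_e(rho) = sup mu_e (possibly +infty) *)
Definition belowC (mu : R -> R) (x : R) : Prop :=
  exists r, 0 <= r /\ x < mu r.

Definition in_Pi n m tl hd (mu : nat -> R -> R) (pi : list nat -> R) : Prop :=
  (forall p, ~ is_path n m tl hd p -> pi p = 0) /\
  (forall p, 0 <= pi p) /\
  sumL (cand_paths n m) pi = 1 /\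
  (forall e, (e < m)%nat -> belowC (mu e) (fpi n m pi e)).

Definition sum_out m (tl : nat -> nat) (v : nat) (F : nat -> R) : R :=
  sumN m (fun e => if Nat.eqb (tl e) v then F e else 0).
Definition sum_in m (hd : nat -> nat) (v : nat) (F : nat -> R) : R :=
  sumN m (fun e => if Nat.eqb (hd e) v then F e else 0).

Definition in_Fv m (tl : nat -> nat) (mu : nat -> R -> R) v (f : nat -> R) :=
  forall e, (e < m)%nat -> tl e = v -> 0 <= f e /\ belowC (mu e) (f e).

Definition upd (f : nat -> R) (e : nat) (x : R) : nat -> R :=
  fun k => if Nat.eqb k e then x else f k.

(* Route choice functions G^v : F_v x Pi -> S(E_v^+), with
   G v f pi e = G^v_e(f_{E_v^+}, pi). *)
Definition route_choice n m tl hd (mu : nat -> R -> R)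
  (G : nat -> (nat -> R) -> (list nat -> R) -> nat -> R) : Prop :=
  (forall v f g pi, (forall e, (e < m)%nat -> tl e = v -> f e = g e) ->
      forall j, G v f pi j = G v g pi j) /\
  (forall v f pi, (v < n)%nat -> in_Fv m tl mu v f -> in_Pi n m tl hd mu pi ->
      (forall e, (e < m)%nat -> tl e = v -> 0 <= G v f pi e) /\
      sum_out m tl v (G v f pi) = 1) /\
  (exists dG : nat -> (list nat -> R) -> nat -> nat -> (nat -> R) -> R,
     (* dG v pi j e f = d G^v_j (f, pi) / d f_e *)
     (forall v pi f j e, (v < n)%nat -> in_Pi n m tl hd mu pi ->
        in_Fv m tl mu v f ->
        (j < m)%nat -> tl j = v -> (e < m)%nat -> tl e = v ->
        deriv_within (fun x => G v (upd f e x) pi j)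
          (fun x => 0 <= x /\ belowC (mu e) x) (f e) (dG v pi j e f)) /\
     (forall v pi f j e, (v < n)%nat -> in_Pi n m tl hd mu pi ->
        in_Fv m tl mu v f ->
        (j < m)%nat -> tl j = v -> (e < m)%nat -> tl e = v ->
        forall eps, eps > 0 -> exists delta, delta > 0 /\
          forall g, in_Fv m tl mu v g ->
            (forall k, (k < m)%nat -> tl k = v -> Rabs (g k - f k) < delta) ->
            Rabs (dG v pi j e g - dG v pi j e f) < eps) /\
     (forall v pi f j e, (v < n)%nat -> in_Pi n m tl hd mu pi ->
        in_Fv m tl mu v f ->
        (j < m)%nat -> tl j = v -> (e < m)%nat -> tl e = v -> j <> e ->
        0 <= dG v pi j e f)) /\
  (forall v pi e, (v < n)%nat -> in_Pi n m tl hd mu pi ->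
      (e < m)%nat -> tl e = v ->
      sum_out m tl v (fpi n m pi) * G v (fpi n m pi) pi e = fpi n m pi e).

Definition Hf m (tl hd : nat -> nat)
  (G : nat -> (nat -> R) -> (list nat -> R) -> nat -> R)
  (f : nat -> R) (pi : list nat -> R) (e : nat) : R :=
  if Nat.eqb (tl e) 0 then G 0%nat f pi e - f e
  else sum_in m hd (tl e) f * G (tl e) f pi e - f e.

Definition Vf n m tl (alpha : R) (f : nat -> R) (pi : list nat -> R) : R :=
  sumN n (fun v => alpha ^ v *
    sum_out m tl v (fun e => Rabs (f e - fpi n m pi e))).

(* W(rho, pi), with rhopi_e = mu_e^{-1}(f^pi_e) *)
Definition Wr n m tl (alpha : R) (rho rhopi : nat -> R) : R :=
  sumN n (fun v => alpha ^ v *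
    sum_out m tl v (fun e => Rabs (rho e - rhopi e))).

Definition gradW (tl : nat -> nat) (alpha : R) (rho rhopi : nat -> R) (e : nat) : R :=
  alpha ^ (tl e) * sgn (rho e - rhopi e).

From Stdlib Require Import Reals List Lra Lia Classical FunctionalExtensionality.
Open Scope R_scope.

(* At a node [v < n] with inflow [lam] ([lam = 1] at the origin), [H = lam G(f) - f] on the
   outgoing links, while consistency and flow conservation give [f^pi = lamp G(f^pi)] there.
   Hence [sum_e sigma_e H_e] splits into [(lam - lamp) sum_e sigma_e G_e(f)], which is at most
   [|lam - lamp| <= sum_(e in E_v^-) |f_e - f^pi_e|], plus
   [lamp sum_e sigma_e (G_e(f) - G_e(f^pi))], which is [<= 0] by cooperativity (raising one
   coordinate raises every other [G_j] while [sum_j G_j = 1]), minus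
   [sum_(e in E_v^+) |f_e - f^pi_e|].  Weighting node [v] by [alpha^v], a link counted as
   incoming at [hd e] gets weight [alpha^(hd e) <= alpha * alpha^(tl e)], so the total is at
   most [alpha V - V].  The gradient identity holds because [mu_e] is strictly increasing, so
   [sgn (rho_e - rho^pi_e) = sgn (f_e - f^pi_e)]. *)

Lemma sumL_app {A} (l1 l2 : list A) F : sumL (l1 ++ l2) F = sumL l1 F + sumL l2 F.
Proof. induction l1 as [|a l1 IH]; simpl; [lra|]. rewrite IH; lra. Qed.

Lemma sumL_ext {A} (l : list A) F F' :
  (forall x, In x l -> F x = F' x) -> sumL l F = sumL l F'.
Proof. induction l as [|a l IH]; simpl; intros H; auto. rewrite H, IH; auto. Qed.

Lemma sumL_le {A} (l : list A) F F' :
  (forall x, In x l -> F x <= F' x) -> sumL l F <= sumL l F'.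
Proof.
  induction l as [|a l IH]; simpl; intros H; [lra|].
  specialize (IH (fun x h => H x (or_intror h))). specialize (H a (or_introl eq_refl)). lra.
Qed.

Lemma sumL_plus {A} (l : list A) F F' :
  sumL l (fun x => F x + F' x) = sumL l F + sumL l F'.
Proof. induction l as [|a l IH]; simpl; [lra|]. rewrite IH; lra. Qed.

Lemma sumL_scal {A} (l : list A) c F : sumL l (fun x => c * F x) = c * sumL l F.
Proof. induction l as [|a l IH]; simpl; [lra|]. rewrite IH; lra. Qed.

Lemma sumL_zero {A} (l : list A) : sumL l (fun _ => 0) = 0.
Proof. induction l as [|a l IH]; simpl; [lra|]. rewrite IH; lra. Qed.

Lemma sumL_comm {A B} (l1 : list A) (l2 : list B) F :
  sumL l1 (fun a => sumL l2 (F a)) = sumL l2 (fun b => sumL l1 (fun a => F a b)).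
Proof.
  induction l1 as [|a l1 IH]; simpl; [now rewrite sumL_zero|].
  rewrite IH, <- sumL_plus. reflexivity.
Qed.

Lemma sumL_nonneg {A} (l : list A) F : (forall x, In x l -> 0 <= F x) -> 0 <= sumL l F.
Proof. intros H. rewrite <- (sumL_zero l). now apply sumL_le. Qed.

Lemma sumN_ext N F F' : (forall k, (k < N)%nat -> F k = F' k) -> sumN N F = sumN N F'.
Proof. intros H; apply sumL_ext; intros k Hk%in_seq; apply H; lia. Qed.

Lemma sumN_le N F F' : (forall k, (k < N)%nat -> F k <= F' k) -> sumN N F <= sumN N F'.
Proof. intros H; apply sumL_le; intros k Hk%in_seq; apply H; lia. Qed.

Lemma sumN_plus N F F' : sumN N (fun k => F k + F' k) = sumN N F + sumN N F'.
Proof. apply sumL_plus. Qed.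

Lemma sumN_scal N c F : sumN N (fun k => c * F k) = c * sumN N F.
Proof. apply sumL_scal. Qed.

Lemma sumN_minus N F F' : sumN N (fun k => F k - F' k) = sumN N F - sumN N F'.
Proof.
  rewrite (sumN_ext N _ (fun k => F k + (-1) * F' k)) by (intros; ring).
  rewrite sumN_plus, sumN_scal; ring.
Qed.

Lemma sumN_S N F : sumN (S N) F = sumN N F + F N.
Proof. unfold sumN. rewrite seq_S, sumL_app. simpl. ring. Qed.

Lemma sumN_delta N k c :
  sumN N (fun j => if Nat.eqb k j then c j else 0) = if Nat.ltb k N then c k else 0.
Proof.
  induction N as [|N IH]; [reflexivity|].
  rewrite sumN_S, IH.
  destruct (Nat.eqb_spec k N), (Nat.ltb_spec k N), (Nat.ltb_spec k (S N)); subst;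
    try lia; ring.
Qed.

Definition fiber_sum (m : nat) (key : nat -> nat) (v : nat) (F : nat -> R) : R :=
  sumN m (fun e => if Nat.eqb (key e) v then F e else 0).

Section FiberSum.
Variables (m : nat) (key : nat -> nat) (v : nat).

Lemma fiber_sum_le F F' :
  (forall e, (e < m)%nat -> key e = v -> F e <= F' e) ->
  fiber_sum m key v F <= fiber_sum m key v F'.
Proof.
  intros H; apply sumN_le; intros e He.
  destruct (Nat.eqb_spec (key e) v); [now apply H | lra].
Qed.

Lemma fiber_sum_ext F F' :
  (forall e, (e < m)%nat -> key e = v -> F e = F' e) ->
  fiber_sum m key v F = fiber_sum m key v F'.
Proof.
  intros H; apply Rle_antisym; apply fiber_sum_le; intros e He Hk; rewrite H; auto; lra.
Qed.

Lemma fiber_sum_zero : fiber_sum m key v (fun _ => 0) = 0.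
Proof.
  unfold fiber_sum. rewrite (sumN_ext m _ (fun _ => 0)) by (intros; now destruct Nat.eqb).
  apply sumL_zero.
Qed.

Lemma fiber_sum_nonneg F :
  (forall e, (e < m)%nat -> key e = v -> 0 <= F e) -> 0 <= fiber_sum m key v F.
Proof. intros H. rewrite <- fiber_sum_zero. now apply fiber_sum_le. Qed.

Lemma fiber_sum_plus F F' :
  fiber_sum m key v (fun e => F e + F' e) = fiber_sum m key v F + fiber_sum m key v F'.
Proof. unfold fiber_sum. rewrite <- sumN_plus. apply sumN_ext; intros; destruct Nat.eqb; ring. Qed.

Lemma fiber_sum_scal c F :
  fiber_sum m key v (fun e => c * F e) = c * fiber_sum m key v F.
Proof. unfold fiber_sum. rewrite <- sumN_scal. apply sumN_ext; intros; destruct Nat.eqb; ring. Qed.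

Lemma fiber_sum_minus F F' :
  fiber_sum m key v (fun e => F e - F' e) = fiber_sum m key v F - fiber_sum m key v F'.
Proof. unfold fiber_sum. rewrite <- sumN_minus. apply sumN_ext; intros; destruct Nat.eqb; ring. Qed.

Lemma Rabs_fiber_sum_le F :
  Rabs (fiber_sum m key v F) <= fiber_sum m key v (fun e => Rabs (F e)).
Proof.
  apply Rabs_le; split.
  - assert (Hlow : fiber_sum m key v (fun e => -1 * Rabs (F e)) <= fiber_sum m key v F).
    { apply fiber_sum_le; intros e _ _.
      pose proof (Rle_abs (- F e)) as Hneg; rewrite Rabs_Ropp in Hneg; lra. }
    rewrite fiber_sum_scal in Hlow; lra.
  - apply fiber_sum_le; intros; apply Rle_abs.
Qed.

Lemma fiber_sum_indicator e : (e < m)%nat ->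
  fiber_sum m key v (fun e' => if Nat.eqb e' e then 1 else 0) = if Nat.eqb (key e) v then 1 else 0.
Proof.
  intros He. unfold fiber_sum.
  rewrite (sumN_ext m _ (fun e' => if Nat.eqb e e' then (if Nat.eqb (key e') v then 1 else 0) else 0)).
  - rewrite sumN_delta. now destruct (Nat.ltb_spec e m); try lia.
  - intros e' _. rewrite (Nat.eqb_sym e e').
    now destruct (Nat.eqb e' e), (Nat.eqb (key e') v).
Qed.

End FiberSum.

Lemma sumN_pow_fiber_sum n m key (a : R) F :
  sumN n (fun v => a ^ v * fiber_sum m key v F) =
  sumN m (fun e => if Nat.ltb (key e) n then a ^ key e * F e else 0).
Proof.
  rewrite (sumN_ext n _ (fun v => sumN m (fun e => if Nat.eqb (key e) v then a ^ v * F e else 0))).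
  - unfold sumN. rewrite sumL_comm. apply sumL_ext; intros e _.
    apply (sumN_delta n (key e) (fun v => a ^ v * F e)).
  - intros v _. unfold fiber_sum. rewrite <- sumN_scal.
    apply sumN_ext; intros; destruct Nat.eqb; ring.
Qed.

Lemma sgn_pos x : 0 < x -> sgn x = 1.
Proof. unfold sgn; destruct Rlt_dec; [auto | lra]. Qed.

Lemma sgn_neg x : x < 0 -> sgn x = -1.
Proof. unfold sgn; destruct Rlt_dec; [lra|]. destruct Rlt_dec; [auto | lra]. Qed.

Lemma sgn_bound x : -1 <= sgn x <= 1.
Proof. unfold sgn; repeat destruct Rlt_dec; lra. Qed.

Lemma sgn_mul_self x : sgn x * x = Rabs x.
Proof.
  unfold sgn; repeat destruct Rlt_dec.
  - rewrite Rabs_right; lra.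
  - rewrite Rabs_left; lra.
  - replace x with 0 by lra. rewrite Rabs_R0; ring.
Qed.

Lemma sgn_sub_strict_mono (h : R -> R) x y :
  (forall s t, 0 <= s -> s < t -> h s < h t) -> 0 <= x -> 0 <= y ->
  sgn (h x - h y) = sgn (x - y).
Proof.
  intros Hh Hx Hy.
  destruct (Rtotal_order x y) as [Hlt | [-> | Hgt]].
  - specialize (Hh x y Hx Hlt). rewrite !sgn_neg; lra.
  - now rewrite !Rminus_diag.
  - specialize (Hh y x Hy Hgt). rewrite !sgn_pos; lra.
Qed.

Lemma deriv_within_continuous phi D t l : deriv_within phi D t l ->
  forall eps, eps > 0 -> exists del, del > 0 /\
    forall y, D y -> Rabs (y - t) < del -> Rabs (phi y - phi t) < eps.
Proof.
  intros Hd eps Heps. destruct (Hd 1 Rlt_0_1) as [d0 [Hd0 H0]].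
  assert (Hl : 0 < Rabs l + 1) by (pose proof (Rabs_pos l); lra).
  exists (Rmin d0 (eps / (Rabs l + 1))). split.
  { apply Rmin_pos; auto. now apply Rdiv_lt_0_compat. }
  intros y Dy Hy. destruct (Req_dec y t) as [-> | Hne].
  { rewrite Rminus_diag, Rabs_R0; lra. }
  assert (Hq := H0 y (conj (conj Dy Hne) (Rlt_le_trans _ _ _ Hy (Rmin_l _ _)))).
  simpl in Hq; unfold R_dist in Hq.
  set (q := (phi y - phi t) / (y - t)) in *.
  assert (Hdiff : phi y - phi t = q * (y - t)) by (unfold q; field; lra).
  assert (Hqb : Rabs q <= Rabs l + 1).
  { replace q with ((q - l) + l) by ring. eapply Rle_trans; [apply Rabs_triang|]. lra. }
  assert (Hyt : Rabs (y - t) * (Rabs l + 1) < eps).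
  { assert (Hy' : Rabs (y - t) < eps / (Rabs l + 1))
      by (eapply Rlt_le_trans; [exact Hy | apply Rmin_r]).
    apply (Rmult_lt_compat_r (Rabs l + 1)) in Hy'; [|lra].
    unfold Rdiv in Hy'. rewrite Rmult_assoc, Rinv_l in Hy' by lra. lra. }
  rewrite Hdiff, Rabs_mult. pose proof (Rabs_pos (y - t)). nra.
Qed.

Lemma deriv_within_interior phi psi D a b c l : deriv_within phi D c l ->
  (forall y, a <= y <= b -> D y) -> (forall y, a <= y <= b -> psi y = phi y) -> a < c < b ->
  derivable_pt_lim psi c l.
Proof.
  intros Hd HD Hpsi Hc eps Heps. destruct (Hd eps Heps) as [d0 [Hd0 H0]].
  set (r := Rmin d0 (Rmin (c - a) (b - c))).
  assert (Hr : 0 < r) by (apply Rmin_pos; auto; apply Rmin_pos; lra).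
  assert (Hrd := Rmin_l d0 (Rmin (c - a) (b - c))).
  assert (Hra := Rmin_l (c - a) (b - c)). assert (Hrb := Rmin_r (c - a) (b - c)).
  assert (Hrm := Rmin_r d0 (Rmin (c - a) (b - c))). fold r in Hrd, Hrm.
  exists (mkposreal r Hr); simpl. intros h Hh Hlt.
  assert (Hb : a <= c + h <= b) by (destruct (Rabs_def2 h _ Hlt); lra).
  rewrite !Hpsi by (auto; lra).
  assert (Hq : dist R_met (c + h) c < d0).
  { simpl; unfold R_dist. replace (c + h - c) with h by ring. lra. }
  assert (Hne : c + h <> c) by (intro Heq; apply Hh; lra).
  specialize (H0 (c + h) (conj (conj (HD _ Hb) Hne) Hq)).
  simpl in H0; unfold R_dist in H0. now replace (c + h - c) with h in H0 by ring.
Qed.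

Definition clamp (a b x : R) : R := Rmax a (Rmin x b).

Lemma clamp_id a b y : a <= y <= b -> clamp a b y = y.
Proof. intros Hy; unfold clamp, Rmax, Rmin; repeat destruct Rle_dec; lra. Qed.

Lemma clamp_contract a b c x : a <= c <= b ->
  a <= clamp a b x <= b /\ Rabs (clamp a b x - c) <= Rabs (x - c).
Proof. intros Hc; unfold clamp, Rmax, Rmin; repeat destruct Rle_dec; split_Rabs; lra. Qed.

(* Extend [phi] outside [[a, b]] by clamping, so that the mean value theorem applies. *)
Lemma deriv_within_nonneg_le phi d D a b : a <= b -> (forall y, a <= y <= b -> D y) ->
  (forall y, a <= y <= b -> deriv_within phi D y (d y) /\ 0 <= d y) -> phi a <= phi b.
Proof.
  intros Hab HD Hder. destruct (Req_dec a b) as [-> | Hne]; [lra|].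
  set (psi := fun t => phi (clamp a b t)).
  assert (Hpsi : forall y, a <= y <= b -> psi y = phi y)
    by (intros y Hy; unfold psi; now rewrite clamp_id).
  assert (Hlim : forall c, a < c < b -> derivable_pt_lim psi c (d c))
    by (intros c Hc; apply (deriv_within_interior phi psi D a b); auto; apply Hder; lra).
  assert (Hcont : forall c, a <= c <= b -> continuity_pt psi c).
  { intros c Hc eps Heps.
    destruct (deriv_within_continuous _ _ _ _ (proj1 (Hder c Hc)) eps Heps) as [del [Hdel Hx]].
    exists del; split; auto. intros x [_ Hxd]. simpl in *; unfold R_dist in *.
    destruct (clamp_contract a b c x Hc) as [Hin Hdist].
    rewrite (Hpsi c Hc). apply Hx; [apply HD; auto | lra]. }
  destruct (MVT psi id a b (fun c Hc => exist _ (d c) (Hlim c Hc))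
              (fun c _ => derivable_pt_id c) ltac:(lra) Hcont
              (fun c _ => derivable_continuous_pt _ _ (derivable_pt_id c))) as [c [Hc Hmvt]].
  rewrite (derive_pt_eq_0 _ _ _ _ (derivable_pt_lim_id c)),
          (derive_pt_eq_0 _ _ _ _ (Hlim c Hc)) in Hmvt.
  rewrite <- (Hpsi a), <- (Hpsi b) by lra. unfold id in Hmvt.
  assert (0 <= d c) by (apply Hder; lra). nra.
Qed.

Lemma upd_upd b k t x : upd (upd b k t) k x = upd b k x.
Proof. apply functional_extensionality; intros e; unfold upd; now destruct Nat.eqb. Qed.

Lemma upd_same b k : upd b k (b k) = b.
Proof.
  apply functional_extensionality; intros e; unfold upd.
  destruct (Nat.eqb_spec e k); now subst.
Qed.

Lemma upd_at b k x : upd b k x k = x.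
Proof. unfold upd; now rewrite Nat.eqb_refl. Qed.

Lemma belowC_le h x y : x <= y -> belowC h y -> belowC h x.
Proof. intros Hxy [r [Hr Hy]]; exists r; split; [auto | lra]. Qed.

Lemma in_Fv_upd m tl mu v b k x : in_Fv m tl mu v b -> 0 <= x -> belowC (mu k) x ->
  in_Fv m tl mu v (upd b k x).
Proof. intros Hb Hx Hbx e He Ht. unfold upd. destruct (Nat.eqb_spec e k); subst; auto. Qed.

Section RouteChoice.
Variables (n m : nat) (tl hd : nat -> nat) (mu : nat -> R -> R).
Variable G : nat -> (nat -> R) -> (list nat -> R) -> nat -> R.
Hypothesis HG : route_choice n m tl hd mu G.
Variables (v : nat) (pi : list nat -> R).
Hypotheses (Hv : (v < n)%nat) (Hpi : in_Pi n m tl hd mu pi).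

Lemma route_choice_upd_mono b k j t1 t2 : in_Fv m tl mu v b ->
  (k < m)%nat -> tl k = v -> (j < m)%nat -> tl j = v -> j <> k ->
  0 <= t1 <= t2 -> belowC (mu k) t2 -> G v (upd b k t1) pi j <= G v (upd b k t2) pi j.
Proof.
  intros Hb Hk Htk Hj Htj Hjk Ht Hbelow.
  destruct HG as [_ [_ [[dG [Hd [_ Hcoop]]] _]]].
  apply (deriv_within_nonneg_le (fun t => G v (upd b k t) pi j) (fun t => dG v pi j k (upd b k t))
           (fun x => 0 <= x /\ belowC (mu k) x)); [lra | |].
  - intros y Hy; split; [lra | apply (belowC_le _ _ t2); tauto].
  - intros y Hy.
    assert (HF : in_Fv m tl mu v (upd b k y))
      by (apply in_Fv_upd; [auto | lra | apply (belowC_le _ _ t2); tauto]).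
    split; [|now apply Hcoop].
    pose proof (Hd v pi (upd b k y) j k Hv Hpi HF Hj Htj Hk Htk) as Hdy.
    rewrite upd_at in Hdy.
    replace (fun x => G v (upd (upd b k y) k x) pi j) with (fun x => G v (upd b k x) pi j)
      in Hdy by (apply functional_extensionality; intros; now rewrite upd_upd).
    exact Hdy.
Qed.

(* Moving the single coordinate [k] moves every other [G_j] the same way, while [sum_j G_j = 1]. *)
Lemma route_choice_sign_upd b k x (sig : nat -> R) : in_Fv m tl mu v b ->
  (k < m)%nat -> tl k = v -> 0 <= x -> belowC (mu k) x ->
  sig k = sgn (x - b k) -> (forall j, -1 <= sig j <= 1) ->
  fiber_sum m tl v (fun j => sig j * (G v (upd b k x) pi j - G v b pi j)) <= 0.
Proof.
  intros Hb Hk Htk Hx Hbx Hs Hsb.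
  assert (HF : in_Fv m tl mu v (upd b k x)) by (apply in_Fv_upd; auto).
  destruct HG as [_ [Hsimplex _]].
  destruct (Hsimplex v _ pi Hv HF Hpi) as [_ Hsum1], (Hsimplex v _ pi Hv Hb Hpi) as [_ Hsum2].
  change (sum_out m tl) with (fiber_sum m tl) in Hsum1, Hsum2.
  destruct (Hb k Hk Htk) as [Hbk Hbkb].
  apply Rle_trans with (fiber_sum m tl v (fun j => sig k * (G v (upd b k x) pi j - G v b pi j))).
  - apply fiber_sum_le; intros j Hj Htj.
    destruct (Nat.eq_dec j k) as [-> | Hjk]; [lra|].
    pose proof (Hsb j).
    destruct (Rtotal_order (b k) x) as [Hlt | [<- | Hgt]].
    + rewrite Hs, sgn_pos by lra.
      pose proof (route_choice_upd_mono b k j (b k) x Hb Hk Htk Hj Htj Hjk ltac:(lra) Hbx).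
      rewrite upd_same in *. nra.
    + rewrite upd_same; lra.
    + rewrite Hs, sgn_neg by lra.
      pose proof (route_choice_upd_mono b k j x (b k) Hb Hk Htk Hj Htj Hjk ltac:(lra) Hbkb).
      rewrite upd_same in *. nra.
  - rewrite fiber_sum_scal, fiber_sum_minus, Hsum1, Hsum2. lra.
Qed.

(* Turn [g] into [f] one link at a time. *)
Lemma route_choice_sign f g : in_Fv m tl mu v f -> in_Fv m tl mu v g ->
  fiber_sum m tl v (fun j => sgn (f j - g j) * (G v f pi j - G v g pi j)) <= 0.
Proof.
  intros Hf Hg. destruct HG as [Hdep _].
  set (h := fun k e => if Nat.ltb e k then f e else g e).
  set (partial := fun k => fiber_sum m tl v (fun j => sgn (f j - g j) * (G v (h k) pi j - G v g pi j))).
  assert (Hh : forall k, in_Fv m tl mu v (h k))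
    by (intros k e He Ht; unfold h; destruct Nat.ltb; auto).
  assert (Hstep : forall k, h (S k) = upd (h k) k (f k)).
  { intros k; apply functional_extensionality; intros e; unfold h, upd.
    destruct (Nat.eqb_spec e k), (Nat.ltb_spec e (S k)), (Nat.ltb_spec e k);
      subst; auto; lia. }
  assert (Hind : forall k, partial k <= 0).
  { induction k as [|k IH].
    - unfold partial. rewrite <- (fiber_sum_zero m tl v). apply fiber_sum_le; intros j _ _.
      unfold h; simpl. rewrite Rminus_diag; lra.
    - enough (Hinc : fiber_sum m tl v
               (fun j => sgn (f j - g j) * (G v (h (S k)) pi j - G v (h k) pi j)) <= 0).
      { unfold partial in *. rewrite (fiber_sum_ext m tl v _
          (fun j => sgn (f j - g j) * (G v (h (S k)) pi j - G v (h k) pi j)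
                  + sgn (f j - g j) * (G v (h k) pi j - G v g pi j))) by (intros; ring).
        rewrite fiber_sum_plus; lra. }
      rewrite Hstep.
      destruct (Nat.lt_ge_cases k m) as [Hk | Hk];
        [destruct (Nat.eq_dec (tl k) v) as [Htk | Htk] |].
      1: { apply route_choice_sign_upd; auto; try apply (Hf k Hk Htk).
           - unfold h. now rewrite Nat.ltb_irrefl.
           - intros; apply sgn_bound. }
      all: rewrite <- (fiber_sum_zero m tl v); apply fiber_sum_le; intros j Hj _;
        rewrite (Hdep v _ (h k) pi) by (intros e He Hte; unfold upd;
          destruct (Nat.eqb_spec e k); [subst; try lia; contradiction | auto]);
        rewrite Rminus_diag; lra. }
  specialize (Hind m). unfold partial in Hind.
  erewrite fiber_sum_ext; [exact Hind|]. intros j Hj _.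
  rewrite (Hdep v f (h m) pi); [auto|].
  intros e He _. unfold h. now destruct (Nat.ltb_spec e m); try lia.
Qed.

End RouteChoice.

Lemma memb_In e p : memb e p = true <-> In e p.
Proof.
  unfold memb. rewrite existsb_exists. split.
  - intros [x [Hx Heq%Nat.eqb_eq]]; now subst.
  - intros H; exists e; split; auto. apply Nat.eqb_refl.
Qed.

Definition path_indicator (p : list nat) (e : nat) : R := if memb e p then 1 else 0.

Lemma fiber_sum_fpi n m (pi : list nat -> R) key v :
  fiber_sum m key v (fpi n m pi) =
  sumL (cand_paths n m) (fun p => pi p * fiber_sum m key v (path_indicator p)).
Proof.
  unfold fiber_sum, fpi.
  rewrite (sumN_ext m _ (fun e => sumL (cand_paths n m)
     (fun p => pi p * (if Nat.eqb (key e) v then path_indicator p e else 0)))).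
  - unfold sumN. rewrite sumL_comm. apply sumL_ext; intros p _. now rewrite <- sumL_scal.
  - intros e _. destruct Nat.eqb.
    + apply sumL_ext; intros p _; unfold path_indicator; destruct memb; ring.
    + rewrite (sumL_ext _ _ (fun _ => 0)) by (intros; ring). now rewrite sumL_zero.
Qed.

Definition inflow m (hd : nat -> nat) (f : nat -> R) (v : nat) : R :=
  if Nat.eqb v 0 then 1 else sum_in m hd v f.

Lemma Rabs_inflow_sub_le m hd f g v :
  Rabs (inflow m hd f v - inflow m hd g v) <= sum_in m hd v (fun e => Rabs (f e - g e)).
Proof.
  unfold inflow. change (sum_in m hd) with (fiber_sum m hd). destruct (Nat.eqb v 0).
  - rewrite Rminus_diag, Rabs_R0. apply fiber_sum_nonneg; intros; apply Rabs_pos.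
  - rewrite <- fiber_sum_minus. apply Rabs_fiber_sum_le.
Qed.

Section Network.
Variables (n m : nat) (tl hd : nat -> nat).
Hypothesis Hnet : network n m tl hd.

Lemma path_from_links p u : path_from n m tl hd u p ->
  forall e, In e p -> (u <= tl e)%nat /\ (e < m)%nat.
Proof.
  destruct Hnet as [Hlink _].
  revert u; induction p as [|e0 p IH]; simpl; intros u Hp e Hin; [contradiction|].
  destruct Hp as [Hm [Ht Hp]]. destruct Hin as [<- | Hin]; [lia|].
  destruct (IH _ Hp e Hin), (Hlink e0 Hm). lia.
Qed.

(* Kirchhoff's law for a single path from [u] to [n]. *)
Lemma path_indicator_balance p u : path_from n m tl hd u p -> forall v,
  fiber_sum m hd v (path_indicator p) + (if Nat.eqb v u then 1 else 0) =
  fiber_sum m tl v (path_indicator p) + (if Nat.eqb v n then 1 else 0).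
Proof.
  revert u; induction p as [|e p IH]; simpl; intros u Hp v.
  - subst u. unfold path_indicator; simpl. rewrite !fiber_sum_zero. ring.
  - destruct Hp as [Hm [Ht Hp]].
    assert (Hnot : memb e p = false).
    { destruct (memb e p) eqn:E; auto. apply memb_In in E.
      destruct (path_from_links _ _ Hp e E). destruct Hnet as [Hlink _].
      destruct (Hlink e Hm). lia. }
    assert (Hsplit : forall key, fiber_sum m key v (path_indicator (e :: p)) =
      fiber_sum m key v (fun e' => if Nat.eqb e' e then 1 else 0)
      + fiber_sum m key v (path_indicator p)).
    { intros key. rewrite <- fiber_sum_plus. apply fiber_sum_ext; intros e' _ _.
      unfold path_indicator; simpl. destruct (Nat.eqb_spec e' e); simpl.
      - subst. rewrite Hnot; ring.
      - destruct memb; ring. }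
    rewrite !Hsplit, !fiber_sum_indicator by auto.
    specialize (IH _ Hp v). subst u.
    rewrite (Nat.eqb_sym (hd e) v), (Nat.eqb_sym (tl e) v). lra.
Qed.

Lemma fiber_sum_hd_0 F : fiber_sum m hd 0 F = 0.
Proof.
  rewrite <- (fiber_sum_zero m hd 0). apply fiber_sum_ext; intros e He Hhd.
  destruct Hnet as [Hlink _]. destruct (Hlink e He). lia.
Qed.

Lemma sum_out_fpi_inflow mu (pi : list nat -> R) v :
  in_Pi n m tl hd mu pi -> (v < n)%nat ->
  sum_out m tl v (fpi n m pi) = inflow m hd (fpi n m pi) v.
Proof.
  intros [Hzero [_ [Hsum _]]] Hv.
  assert (Hbal : fiber_sum m tl v (fpi n m pi) =
    fiber_sum m hd v (fpi n m pi) + (if Nat.eqb v 0 then 1 else 0)).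
  { rewrite !fiber_sum_fpi.
    rewrite (sumL_ext _ (fun p => pi p * fiber_sum m tl v (path_indicator p))
                       (fun p => pi p * fiber_sum m hd v (path_indicator p)
                                    + (if Nat.eqb v 0 then 1 else 0) * pi p)).
    - now rewrite sumL_plus, sumL_scal, Hsum, Rmult_1_r.
    - intros p _. destruct (classic (is_path n m tl hd p)) as [Hp | Hp].
      + pose proof (path_indicator_balance p 0 Hp v) as Hb.
        destruct (Nat.eqb_spec v n); [lia|]. nra.
      + rewrite Hzero by auto. ring. }
  unfold inflow. change (sum_out m tl) with (fiber_sum m tl). rewrite Hbal.
  destruct (Nat.eqb_spec v 0) as [-> | _].
  - rewrite fiber_sum_hd_0; ring.
  - unfold sum_in, fiber_sum; ring.
Qed.

End Network.

Lemma Hf_inflow m tl hd G f pi e :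
  Hf m tl hd G f pi e = inflow m hd f (tl e) * G (tl e) f pi e - f e.
Proof.
  unfold Hf, inflow. destruct (Nat.eqb_spec (tl e) 0) as [Htl | _]; [rewrite Htl |]; ring.
Qed.

Section NodeBalance.
Variables (n m : nat) (tl hd : nat -> nat) (mu : nat -> R -> R).
Variable G : nat -> (nat -> R) -> (list nat -> R) -> nat -> R.
Hypotheses (Hnet : network n m tl hd) (HG : route_choice n m tl hd mu G).
Variable pi : list nat -> R.
Hypothesis Hpi : in_Pi n m tl hd mu pi.

Lemma fpi_in_Fv v : in_Fv m tl mu v (fpi n m pi).
Proof.
  destruct Hpi as [_ [Hpi0 [_ Hbelow]]]. intros e He _. split; auto.
  apply sumL_nonneg; intros p _; destruct memb; auto; lra.
Qed.

(* With [lam], [lamp] the inflows of [f], [f^pi] at [v] and [f^pi = lamp G(f^pi)] on [E_v^+],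
   [sigma_e H_e = sigma_e (lam - lamp) G_e(f) + lamp sigma_e (G_e(f) - G_e(f^pi)) - |f_e - f^pi_e|]. *)
Lemma node_sign_H_le f v : (v < n)%nat -> in_Fv m tl mu v f ->
  sum_out m tl v (fun e => sgn (f e - fpi n m pi e) * Hf m tl hd G f pi e)
  <= sum_in m hd v (fun e => Rabs (f e - fpi n m pi e))
     - sum_out m tl v (fun e => Rabs (f e - fpi n m pi e)).
Proof.
  intros Hv HfF.
  set (fp := fpi n m pi).
  set (lam := inflow m hd f v). set (lamp := inflow m hd fp v).
  set (A := fiber_sum m tl v (fun e => sgn (f e - fp e) * G v f pi e)).
  set (B := fiber_sum m tl v (fun e => sgn (f e - fp e) * (G v f pi e - G v fp pi e))).
  pose proof HG as [_ [Hsimplex [_ Hcons]]].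
  destruct (Hsimplex v f pi Hv HfF Hpi) as [HG0 HG1]. change (sum_out m tl) with (fiber_sum m tl) in HG1.
  assert (Hfp : forall e, (e < m)%nat -> tl e = v -> fp e = lamp * G v fp pi e).
  { intros e He Ht. unfold lamp, fp.
    rewrite <- (sum_out_fpi_inflow n m tl hd Hnet mu pi v Hpi Hv). symmetry; auto. }
  assert (Hdecomp : sum_out m tl v (fun e => sgn (f e - fp e) * Hf m tl hd G f pi e)
                    = (lam - lamp) * A + lamp * B - fiber_sum m tl v (fun e => Rabs (f e - fp e))).
  { unfold A, B. change (sum_out m tl) with (fiber_sum m tl). rewrite <- !fiber_sum_scal, <- fiber_sum_plus, <- fiber_sum_minus.
    apply fiber_sum_ext; intros e He Ht.
    rewrite Hf_inflow, Ht, <- (sgn_mul_self (f e - fp e)).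
    generalize (sgn (f e - fp e)); intros s. rewrite (Hfp e He Ht). unfold lam. ring. }
  assert (HA : Rabs A <= 1).
  { rewrite <- HG1. eapply Rle_trans; [apply Rabs_fiber_sum_le | apply fiber_sum_le].
    intros e He Ht. rewrite Rabs_mult. pose proof (sgn_bound (f e - fp e)).
    pose proof (HG0 e He Ht). rewrite (Rabs_right (G v f pi e)) by lra.
    apply Rabs_le in H as Hs. nra. }
  assert (HB : B <= 0) by (apply (route_choice_sign n m tl hd mu G HG); auto; apply fpi_in_Fv).
  assert (Hlamp : 0 <= lamp).
  { unfold lamp, fp. rewrite <- (sum_out_fpi_inflow n m tl hd Hnet mu pi v Hpi Hv).
    change (sum_out m tl) with (fiber_sum m tl).
    apply fiber_sum_nonneg; intros e He Ht. apply (fpi_in_Fv v e He Ht). }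
  assert (Hgap : Rabs (lam - lamp) <= sum_in m hd v (fun e => Rabs (f e - fp e)))
    by apply Rabs_inflow_sub_le.
  assert (HAgap : (lam - lamp) * A <= Rabs (lam - lamp)).
  { eapply Rle_trans; [apply Rle_abs|]. rewrite Rabs_mult.
    pose proof (Rabs_pos (lam - lamp)). nra. }
  rewrite Hdecomp. change (sum_out m tl) with (fiber_sum m tl) in *. nra.
Qed.

End NodeBalance.

Lemma pow_le_pow_decr a i j : 0 <= a <= 1 -> (i <= j)%nat -> a ^ j <= a ^ i.
Proof.
  intros Ha Hij. replace j with (i + (j - i))%nat by lia. rewrite pow_add.
  pose proof (pow_le a i ltac:(lra)). pose proof (pow_le a (j - i) ltac:(lra)).
  assert (a ^ (j - i) <= 1) by (rewrite <- (pow1 (j - i)); apply pow_incr; lra).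
  nra.
Qed.

Lemma discounted_inflow_le n m tl hd alpha (x : nat -> R) :
  network n m tl hd -> 0 <= alpha <= 1 -> (forall e, 0 <= x e) ->
  sumN n (fun v => alpha ^ v * sum_in m hd v x)
  <= alpha * sumN n (fun v => alpha ^ v * sum_out m tl v x).
Proof.
  intros [Hlink _] Halpha Hx.
  change (sum_in m hd) with (fiber_sum m hd). change (sum_out m tl) with (fiber_sum m tl).
  rewrite !sumN_pow_fiber_sum, <- sumN_scal.
  apply sumN_le; intros e He. destruct (Hlink e He) as [Htlhd Hhd].
  pose proof (Hx e). pose proof (pow_le alpha (tl e) ltac:(lra)).
  destruct (Nat.ltb_spec (tl e) n), (Nat.ltb_spec (hd e) n); try lia.
  - pose proof (pow_le_pow_decr alpha (S (tl e)) (hd e) Halpha Htlhd). simpl in *. nra.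
  - apply Rmult_le_pos; [lra | now apply Rmult_le_pos].
Qed.

Lemma flow_density_range h r : flow_density h -> 0 <= r -> 0 <= h r /\ belowC h (h r).
Proof.
  intros [_ [Hinc [_ H0]]] Hr. split.
  - destruct (Req_dec r 0) as [-> | Hne]; [lra|]. rewrite <- H0. left; apply Hinc; lra.
  - exists (r + 1). split; [lra | apply Hinc; lra].
Qed.

Lemma sum_gradW_H n m tl alpha (mu : nat -> R -> R) rho rhopi (y H : nat -> R) :
  (forall e, (e < m)%nat -> (tl e < n)%nat) ->
  (forall e, (e < m)%nat -> flow_density (mu e)) ->
  (forall e, (e < m)%nat -> 0 <= rho e) ->
  (forall e, (e < m)%nat -> 0 <= rhopi e /\ mu e (rhopi e) = y e) ->
  sumN m (fun e => gradW tl alpha rho rhopi e * H e)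
  = sumN n (fun v => alpha ^ v * sum_out m tl v (fun e => sgn (mu e (rho e) - y e) * H e)).
Proof.
  intros Htl Hmu Hrho Hrhopi.
  change (sum_out m tl) with (fiber_sum m tl). rewrite sumN_pow_fiber_sum.
  apply sumN_ext; intros e He. specialize (Htl e He).
  destruct (Nat.ltb_spec (tl e) n); [|lia].
  destruct (Hrhopi e He) as [Hpos <-]. destruct (Hmu e He) as [_ [Hinc _]].
  unfold gradW. rewrite (sgn_sub_strict_mono (mu e)); auto. ring.
Qed.

Theorem lemma3
  (n m : nat) (tl hd : nat -> nat) (mu : nat -> R -> R)
  (G : nat -> (nat -> R) -> (list nat -> R) -> nat -> R)
  (alpha : R)
  (Hnet : network n m tl hd)
  (Hmu : forall e, (e < m)%nat -> flow_density (mu e))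
  (HG : route_choice n m tl hd mu G)
  (Halpha : 0 < alpha < 1)
  (rho : nat -> R) (Hrho : forall e, (e < m)%nat -> 0 <= rho e)
  (pi : list nat -> R) (Hpi : in_Pi n m tl hd mu pi)
  (rhopi : nat -> R)
  (Hrhopi : forall e, (e < m)%nat ->
     0 <= rhopi e /\ mu e (rhopi e) = fpi n m pi e) :
  let f := fun e => mu e (rho e) in
  sumN m (fun e => gradW tl alpha rho rhopi e * Hf m tl hd G f pi e)
    = sumN n (fun v => alpha ^ v *
        sum_out m tl v (fun e => sgn (f e - fpi n m pi e) * Hf m tl hd G f pi e))
  /\
  sumN n (fun v => alpha ^ v *
        sum_out m tl v (fun e => sgn (f e - fpi n m pi e) * Hf m tl hd G f pi e))
    <= - (1 - alpha) * Vf n m tl alpha f pi.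
Proof.
  intros f. split.
  - apply (sum_gradW_H n m tl alpha mu rho rhopi (fpi n m pi)); auto.
    intros e He. destruct (proj1 Hnet e He). lia.
  - set (x := fun e => Rabs (f e - fpi n m pi e)).
    assert (HfF : forall v, in_Fv m tl mu v f)
      by (intros v e He _; unfold f; apply flow_density_range; auto).
    apply Rle_trans with
      (sumN n (fun v => alpha ^ v * sum_in m hd v x) - sumN n (fun v => alpha ^ v * sum_out m tl v x)).
    + rewrite <- sumN_minus. apply sumN_le; intros v Hv.
      rewrite <- Rmult_minus_distr_l. apply Rmult_le_compat_l; [apply pow_le; lra|].
      now apply (node_sign_H_le n m tl hd mu G Hnet HG pi Hpi).
    + pose proof (discounted_inflow_le n m tl hd alpha x Hnet ltac:(lra)
                    (fun e => Rabs_pos _)).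
      unfold Vf. fold x. lra.
Qed.
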